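(* Let $n\ge 1$ and let $g(q)=q^{n}+q^{n-1}a_{n-1}+\dots+qa_1+a_0$ with $a_0,\dots,a_{n-1}\in\mathbb{H}$. Let $\alpha_1,\alpha_2,\dots,\alpha_{n-1}$ be arbitrary positive real numbers and set $\alpha_0=0$, $\alpha_n=1$. Then every zero $q\in\mathbb{H}$ of $g$ satisfies $$|q|\le \max\Big\{\frac{\alpha_i}{\alpha_{i+1}}+\frac{|a_i|}{\alpha_{i+1}}\ :\ i=0,1,\dots,n-1\Big\}.$$
   Context: $\mathbb{H}$ denotes the real quaternions $a_0+a_1i+a_2j+a_3k$ with $i^2=j^2=k^2=ijk=-1$; for $q=\alpha+\beta i+\gamma j+\delta k$, $|q|=\sqrt{\alpha^2+\beta^2+\gamma^2+\delta^2}$. The polynomial $g$ has its coefficients written to the right of the powers of the variable, and it is evaluated at $q\in\mathbb{H}$ by direct substitution, $g(q)=q^n+q^{n-1}a_{n-1}+\dots+qa_1+a_0$; a zero of $g$ is a $q\in\mathbb{H}$ with $g(q)=0$. *)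

From HB Require Import structures.
From mathcomp Require Import all_boot all_order all_algebra.
From mathcomp Require Import reals.
Set Implicit Arguments. Unset Strict Implicit. Unset Printing Implicit Defensive.
Import Order.TTheory GRing.Theory Num.Theory.
Local Open Scope ring_scope.

Section Quat.
Variable R : realType.

(* q = q0 + q1 i + q2 j + q3 k *)
Record quat := Quat { q0 : R; q1 : R; q2 : R; q3 : R }.

Definition qzero : quat := Quat 0 0 0 0.
Definition qone : quat := Quat 1 0 0 0.

Definition qadd (p q : quat) : quat :=
  Quat (q0 p + q0 q) (q1 p + q1 q) (q2 p + q2 q) (q3 p + q3 q).

(* Hamilton product, from i^2 = j^2 = k^2 = ijk = -1 *)
Definition qmul (p q : quat) : quat :=
  Quat (q0 p * q0 q - q1 p * q1 q - q2 p * q2 q - q3 p * q3 q)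
       (q0 p * q1 q + q1 p * q0 q + q2 p * q3 q - q3 p * q2 q)
       (q0 p * q2 q - q1 p * q3 q + q2 p * q0 q + q3 p * q1 q)
       (q0 p * q3 q + q1 p * q2 q - q2 p * q1 q + q3 p * q0 q).

Definition qnorm (q : quat) : R :=
  Num.sqrt (q0 q ^+ 2 + q1 q ^+ 2 + q2 q ^+ 2 + q3 q ^+ 2).

Fixpoint qpow (q : quat) (k : nat) : quat :=
  match k with
  | 0 => qone
  | k'.+1 => qmul (qpow q k') q
  end.

(* g(q) = q^n + q^{n-1} a_{n-1} + ... + q a_1 + a_0
   (coefficients on the right, evaluation by direct substitution) *)
Definition geval (n : nat) (a : nat -> quat) (q : quat) : quat :=
  qadd (qpow q n) (foldr qadd qzero [seq qmul (qpow q i) (a i) | i <- iota 0 n]).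

End Quat.

(* If |q| exceeded the bound M, then alpha_i + |a_i| < alpha_{i+1} |q| for
   every i, i.e. |q|^i |a_i| < alpha_{i+1} |q|^{i+1} - alpha_i |q|^i.  Summing,
   the right-hand side telescopes to alpha_n |q|^n - alpha_0 = |q|^n, so
   sum_i |q|^i |a_i| < |q|^n.  But the quaternion norm is multiplicative and
   subadditive, so g(q) = 0 forces |q|^n <= sum_i |q|^i |a_i|. *)
From HB Require Import structures.
From mathcomp Require Import all_boot all_order all_algebra.
From mathcomp Require Import reals.
From mathcomp Require Import ring lra.

Set Implicit Arguments.
Unset Strict Implicit.
Unset Printing Implicit Defensive.
Import Order.TTheory GRing.Theory Num.Theory.
Local Open Scope ring_scope.

Section WeightedCauchyBound.
Context {R : realFieldType}.

Lemma pow_le_weighted_sum_bound (n : nat) (alpha c : nat -> R) (r : R) :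
  (0 < n)%N -> alpha 0%N = 0 -> alpha n = 1 ->
  (forall i, (i < n)%N -> 0 < alpha i.+1) ->
  r ^+ n <= \sum_(0 <= i < n) r ^+ i * c i ->
  r <= \big[Num.max/0]_(i < n) (alpha i / alpha i.+1 + c i / alpha i.+1).
Proof.
move=> n_gt0 alpha0 alphan alpha_gt0 r_le; rewrite leNgt; apply/negP => ltMr.
have r_gt0 : 0 < r := le_lt_trans (bigmax_ge_id _ _ _ _) ltMr.
have step i : (i < n)%N ->
    r ^+ i * c i < alpha i.+1 * r ^+ i.+1 - alpha i * r ^+ i.
  move=> lt_in; have ai_gt0 := alpha_gt0 i lt_in.
  have : alpha i / alpha i.+1 + c i / alpha i.+1 < r.
    exact: le_lt_trans (le_bigmax _ _ (Ordinal lt_in)) ltMr.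
  rewrite -mulrDl ltr_pdivrMr // => lt_i.
  rewrite exprS mulrA -mulrBl mulrC ltr_pM2r ?exprn_gt0 //; lra.
have : \sum_(0 <= i < n) r ^+ i * c i <
       \sum_(0 <= i < n) (alpha i.+1 * r ^+ i.+1 - alpha i * r ^+ i).
  rewrite big_nat_cond [X in _ < X]big_nat_cond.
  apply: ltr_sum => [|i /andP[/andP[_ lt_in] _]]; last exact: step.
  by case: n n_gt0 {alphan alpha_gt0 r_le ltMr step}.
rewrite (telescope_sumr (fun i => alpha i * r ^+ i)) //.
rewrite alphan alpha0 mul0r subr0 mul1r => sum_lt.
by have := le_lt_trans r_le sum_lt; rewrite ltxx.
Qed.

End WeightedCauchyBound.

Section QuaternionNorm.
Context {R : realType}.
Implicit Types p q : quat R.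

Definition qnorm2 q : R := q0 q ^+ 2 + q1 q ^+ 2 + q2 q ^+ 2 + q3 q ^+ 2.

Definition qdot p q : R := q0 p * q0 q + q1 p * q1 q + q2 p * q2 q + q3 p * q3 q.

Lemma qnormE q : qnorm q = Num.sqrt (qnorm2 q).
Proof. by []. Qed.

Lemma qnorm2_ge0 q : 0 <= qnorm2 q.
Proof. by rewrite /qnorm2 !addr_ge0 ?sqr_ge0. Qed.

Lemma qnorm_ge0 q : 0 <= qnorm q.
Proof. exact: sqrtr_ge0. Qed.

Lemma qnorm0 : qnorm (qzero R) = 0.
Proof. by rewrite /qnorm /= expr0n /= !addr0 sqrtr0. Qed.

Lemma qnorm1 : qnorm (qone R) = 1.
Proof. by rewrite /qnorm /= expr1n expr0n /= !addr0 sqrtr1. Qed.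

(* Euler's four-square identity. *)
Lemma qnorm2M p q : qnorm2 (qmul p q) = qnorm2 p * qnorm2 q.
Proof. by rewrite /qnorm2 /=; ring. Qed.

Lemma qnormM p q : qnorm (qmul p q) = qnorm p * qnorm q.
Proof. by rewrite -sqrtrM ?qnorm2_ge0 // -qnorm2M. Qed.

Lemma qnorm_qpow q k : qnorm (qpow q k) = qnorm q ^+ k.
Proof. by elim: k => [|k IHk] /=; rewrite ?qnorm1 // qnormM IHk exprSr. Qed.

Lemma qnorm2D p q : qnorm2 (qadd p q) = qnorm2 p + qnorm2 q + 2 * qdot p q.
Proof. by rewrite /qnorm2 /qdot /=; ring. Qed.

(* Lagrange's identity: qnorm2 p * qnorm2 q - qdot p q ^+ 2 is a sum of squares. *)
Lemma qdot_le_qnorm p q : qdot p q <= qnorm p * qnorm q.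
Proof.
rewrite -sqrtrM ?qnorm2_ge0 //; apply: le_trans (ler_norm _) _.
rewrite -sqrtr_sqr ler_sqrt ?mulr_ge0 ?qnorm2_ge0 // -subr_ge0.
have -> : qnorm2 p * qnorm2 q - qdot p q ^+ 2 =
    (q0 p * q1 q - q1 p * q0 q) ^+ 2 + (q0 p * q2 q - q2 p * q0 q) ^+ 2 +
    (q0 p * q3 q - q3 p * q0 q) ^+ 2 + (q1 p * q2 q - q2 p * q1 q) ^+ 2 +
    (q1 p * q3 q - q3 p * q1 q) ^+ 2 + (q2 p * q3 q - q3 p * q2 q) ^+ 2.
  by rewrite /qnorm2 /qdot; ring.
by rewrite !addr_ge0 ?sqr_ge0.
Qed.

Lemma qnormD p q : qnorm (qadd p q) <= qnorm p + qnorm q.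
Proof.
rewrite -[qnorm p + qnorm q]ger0_norm ?addr_ge0 ?qnorm_ge0 // -sqrtr_sqr.
rewrite qnormE ler_sqrt ?sqr_ge0 // qnorm2D.
have sqr_p : qnorm p ^+ 2 = qnorm2 p by rewrite sqr_sqrtr ?qnorm2_ge0.
have sqr_q : qnorm q ^+ 2 = qnorm2 q by rewrite sqr_sqrtr ?qnorm2_ge0.
have := qdot_le_qnorm p q; rewrite -sqr_p -sqr_q; lra.
Qed.

Lemma qnorm_foldr_qadd (s : seq (quat R)) :
  qnorm (foldr (@qadd R) (qzero R) s) <= \sum_(p <- s) qnorm p.
Proof.
elim: s => [|p s IHs] /=; first by rewrite big_nil qnorm0.
by rewrite big_cons; apply: le_trans (qnormD _ _) _; rewrite lerD2l.
Qed.

Lemma qnorm_eq_of_qadd_eq0 p q : qadd p q = qzero R -> qnorm p = qnorm q.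
Proof.
case: p q => [a b c d] [e f g h] [] /= /eqP; rewrite addr_eq0 => /eqP ->.
move=> /eqP; rewrite addr_eq0 => /eqP ->; move=> /eqP; rewrite addr_eq0 => /eqP ->.
by move=> /eqP; rewrite addr_eq0 => /eqP ->; rewrite /qnorm /= !sqrrN.
Qed.

Lemma qnorm_root_pow_le n (a : nat -> quat R) q : geval n a q = qzero R ->
  qnorm q ^+ n <= \sum_(0 <= i < n) qnorm q ^+ i * qnorm (a i).
Proof.
move=> /qnorm_eq_of_qadd_eq0; rewrite qnorm_qpow => ->.
apply: le_trans (qnorm_foldr_qadd _) _.
by rewrite big_map /index_iota subn0; apply: ler_sum => i _; rewrite qnormM qnorm_qpow.
Qed.

End QuaternionNorm.

Theorem theorem1 (R : realType) (n : nat) (a : nat -> quat R) (alpha : nat -> R)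
  (hn : (1 <= n)%N)
  (halpha_pos : forall i : nat, (1 <= i)%N -> (i <= n.-1)%N -> 0 < alpha i)
  (halpha0 : alpha 0%N = 0) (halphan : alpha n = 1)
  (q : quat R) (hq : geval n a q = qzero R) :
  qnorm q <= \big[Num.max/0]_(i < n)
               (alpha i / alpha i.+1 + qnorm (a i) / alpha i.+1).
Proof.
apply: (pow_le_weighted_sum_bound hn halpha0 halphan
  _ (qnorm_root_pow_le hq)) => i lt_in.
have [lt_Sin|le_nSi] := ltnP i.+1 n.
- by apply: halpha_pos; rewrite // -ltnS prednK.
- by rewrite (@anti_leq i.+1 n) ?lt_in ?le_nSi // halphan ltr01.
Qed.
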